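(* Assume $f$ and all $g_i$ are $C^1$, and the bounded measurable functions $w_i$ on $[t_k,t_{k+1}]$ satisfy \[ \int_{t_k}^{t_{k+1}}\big(v_i(t)-w_i(t)\big)\,dt=0\qquad(i=1,\dots,m). \] Then the local error is $O(h_k^2)$: there is a constant $C$ depending only on the standing bounds ($K,K_i,L,L_i,\Lambda,V_i$) and on bounds for $\sup|w_i|$ such that $\|x(t_{k+1})-y(t_{k+1})\|\le C\,h_k^2$.
   Context: Setting: for $m\ge 1$ consider on $\mathbb{R}^n$ the input-affine system $\dot x(t)=f(x(t))+\sum_{i=1}^m g_i(x(t))v_i(t)$, where $f,g_i:\mathbb{R}^n\to\mathbb{R}^n$ and each $v_i$ is a Lebesgue measurable function with $|v_i(t)|\le V_i$ for some $V_i>0$. Fix a time step $[t_k,t_{k+1}]$ with $h_k=t_{k+1}-t_k>0$ and $t_{k+1/2}=(t_k+t_{k+1})/2$, and let $x$ be a solution on $[t_k,t_{k+1}]$. Given real-valued bounded measurable functions $w_i$ on $[t_k,t_{k+1}]$, let $y$ be the solution of the approximate system $\dot y(t)=f(y(t))+\sum_{i=1}^m g_i(y(t))w_i(t)$ with $y(t_k)=x(t_k)$. Norms: $\|x\|=\max_j|x_j|$ on $\mathbb{R}^n$, the induced matrix norm $\|Q\|=\max_k\sum_i|q_{ki}|$, and the logarithmic norm $\lambda(Q)=\max_k\big(q_{kk}+\sum_{i\neq k}|q_{ki}|\big)$. Standing bounds: there is a convex set $B$ containing $x(t)$ and $y(t)$ for all $t\in[t_k,t_{k+1}]$ on which $\|f\|\le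 K$, $\|g_i\|\le K_i$, $\|Df\|\le L$, $\|Dg_i\|\le L_i$, $\|D^2f\|\le H$, $\|D^2g_i\|\le H_i$ (whenever these derivatives exist; $D$ is the Jacobian, $D^2$ the second derivative) and $\lambda(Df)\le\Lambda$, with $\Lambda\neq 0$. Put $K'=\sum_{i=1}^m V_iK_i$, $L'=\sum_{i=1}^m V_iL_i$, $H'=\sum_{i=1}^m V_iH_i$. *)

(* classical reals. Vectors in R^n are represented as
   functions nat -> R, of which only the coordinates j < n are relevant. *)
From Stdlib Require Import Reals Lra.
Open Scope R_scope.

Fixpoint rsum (n : nat) (F : nat -> R) : R :=
  match n with O => 0 | S k => rsum k F + F k end.

Fixpoint rmaxn (n : nat) (F : nat -> R) : R :=
  match n with O => 0 | S O => F O | S k => Rmax (rmaxn k F) (F k) end.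

Definition vnorm (n : nat) (x : nat -> R) : R := rmaxn n (fun j => Rabs (x j)).

Definition mnorm (n : nat) (Q : nat -> nat -> R) : R :=
  rmaxn n (fun k => rsum n (fun i => Rabs (Q k i))).

Definition lognorm (n : nat) (Q : nat -> nat -> R) : R :=
  rmaxn n (fun k => Q k k + rsum n (fun i => if Nat.eqb i k then 0 else Rabs (Q k i))).

Definition vsub (x y : nat -> R) : nat -> R := fun j => x j - y j.
Definition vadd (x y : nat -> R) : nat -> R := fun j => x j + y j.
Definition vscal (s : R) (x : nat -> R) : nat -> R := fun j => s * x j.
Definition matvec (n : nat) (Q : nat -> nat -> R) (u : nat -> R) : nat -> R :=
  fun k => rsum n (fun i => Q k i * u i).
Definition msub (P Q : nat -> nat -> R) : nat -> nat -> R := fun k i => P k i - Q k i.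

(* F : R^n -> R^n is C^1 with Jacobian DF (DF x k i = d F_k / d x_i at x):
   Frechet differentiable everywhere with derivative DF, and DF continuous. *)
Definition C1_with (n : nat) (F : (nat -> R) -> (nat -> R))
    (DF : (nat -> R) -> nat -> nat -> R) : Prop :=
  (forall x eps, 0 < eps -> exists delta, 0 < delta /\
     forall y, vnorm n (vsub y x) < delta ->
       vnorm n (vsub (vsub (F y) (F x)) (matvec n (DF x) (vsub y x)))
         <= eps * vnorm n (vsub y x)) /\
  (forall x eps, 0 < eps -> exists delta, 0 < delta /\
     forall y, vnorm n (vsub y x) < delta -> mnorm n (msub (DF y) (DF x)) < eps).

Definition convex (B : (nat -> R) -> Prop) : Prop :=
  forall p q s, B p -> B q -> 0 <= s <= 1 -> B (vadd (vscal s p) (vscal (1 - s) q)).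

Definition outer_le (E : R -> Prop) (r : R) : Prop :=
  forall eps, 0 < eps -> exists a b : nat -> R,
    (forall k, a k <= b k) /\
    (forall t, E t -> exists k, a k < t < b k) /\
    (forall N, rsum N (fun k => b k - a k) <= r + eps).

Definition null_set (E : R -> Prop) : Prop := outer_le E 0.

Definition open_set (O : R -> Prop) : Prop :=
  forall t, O t -> exists d, 0 < d /\ forall s, Rabs (s - t) < d -> O s.

Definition leb_measurable_set (E : R -> Prop) : Prop :=
  forall eps, 0 < eps -> exists O, open_set O /\ (forall t, E t -> O t) /\
    outer_le (fun t => O t /\ ~ E t) eps.

Definition measurable_on (a b : R) (u : R -> R) : Prop :=
  forall c, leb_measurable_set (fun t => a <= t <= b /\ u t < c).

Definition ae_on (a b : R) (P : R -> Prop) : Prop :=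
  exists N, null_set N /\ forall t, a <= t <= b -> ~ N t -> P t.

Definition abs_cont_on (a b : R) (F : R -> R) : Prop :=
  forall eps, 0 < eps -> exists delta, 0 < delta /\
    forall (N : nat) (s e : nat -> R),
      (forall k, (k < N)%nat -> a <= s k /\ s k <= e k /\ e k <= b) ->
      (forall k, (S k < N)%nat -> e k <= s (S k)) ->
      rsum N (fun k => e k - s k) < delta ->
      rsum N (fun k => Rabs (F (e k) - F (s k))) < eps.

(* Lebesgue integral of a bounded measurable u over [a,b] equals I:
   u is a.e. the derivative of an absolutely continuous F with
   F b - F a = I (the fundamental theorem of Lebesgue calculus). *)
Definition leb_integral_is (a b : R) (u : R -> R) (I : R) : Prop :=
  exists F : R -> R, abs_cont_on a b F /\
    ae_on a b (fun t => derivable_pt_lim F t (u t)) /\ F b - F a = I.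

(* z is a (Caratheodory) solution on [a,b] of
   z' = F(z) + sum_{i<m} G_i(z) u_i(t): each coordinate j < n is absolutely
   continuous on [a,b] and the equation holds a.e. on [a,b]. *)
Definition solution_on (n m : nat) (a b : R)
    (F : (nat -> R) -> (nat -> R)) (G : nat -> (nat -> R) -> (nat -> R))
    (u : nat -> R -> R) (z : R -> nat -> R) : Prop :=
  (forall j, (j < n)%nat -> abs_cont_on a b (fun t => z t j)) /\
  ae_on a b (fun t => forall j, (j < n)%nat ->
    derivable_pt_lim (fun s => z s j) t
      (F (z t) j + rsum m (fun i => G i (z t) j * u i t))).

From Stdlib Require Import Reals.
Open Scope R_scope.
From Stdlib Require Import Lra Lia Classical ClassicalEpsilon FunctionalExtensionality.

(* Let F_i be a primitive of v_i - w_i; by the moment condition F_i(t_k) = F_i(t_{k+1}).  For a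
   coordinate j, the corrected gap z = x_j - y_j - sum_i g_ij(y(t_k)) (F_i - F_i(t_k)) vanishes at
   t_k and equals x_j - y_j at t_{k+1}.  Its derivative is
     f_j(x) - f_j(y) + sum_i (g_ij(x) - g_ij(y)) v_i + (g_ij(y) - g_ij(y(t_k))) (v_i - w_i),
   and since x and y move with bounded speed every difference here is O(h) by the mean value
   theorem, so |z'| = O(h) and |z(t_{k+1})| = O(h^2).  As the solutions are only Caratheodory
   solutions, the last step uses the mean value inequality for absolutely continuous functions
   whose derivative is bounded almost everywhere, proved with Cousin's lemma. *)

Lemma rsum_ext n F G : (forall k, (k < n)%nat -> F k = G k) -> rsum n F = rsum n G.
Proof.
  induction n as [|n IH]; intros H; simpl; [reflexivity|].
  rewrite IH by (intros; apply H; lia). rewrite H by lia. reflexivity.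
Qed.

Lemma rsum_le n F G : (forall k, (k < n)%nat -> F k <= G k) -> rsum n F <= rsum n G.
Proof.
  induction n as [|n IH]; intros H; simpl; [lra|].
  pose proof (IH (fun k Hk => H k ltac:(lia))). pose proof (H n ltac:(lia)). lra.
Qed.

Lemma rsum_nonneg n F : (forall k, (k < n)%nat -> 0 <= F k) -> 0 <= rsum n F.
Proof.
  induction n as [|n IH]; intros H; simpl; [lra|].
  pose proof (IH (fun k Hk => H k ltac:(lia))). pose proof (H n ltac:(lia)). lra.
Qed.

Lemma rsum_zero n F : (forall k, (k < n)%nat -> F k = 0) -> rsum n F = 0.
Proof.
  induction n as [|n IH]; intros H; simpl; [reflexivity|].
  rewrite IH by (intros; apply H; lia). rewrite H by lia. ring.
Qed.

Lemma rsum_plus n F G : rsum n (fun k => F k + G k) = rsum n F + rsum n G.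
Proof. induction n as [|n IH]; simpl; [lra|]. rewrite IH. ring. Qed.

Lemma rsum_minus n F G : rsum n (fun k => F k - G k) = rsum n F - rsum n G.
Proof. induction n as [|n IH]; simpl; [lra|]. rewrite IH. ring. Qed.

Lemma rsum_scal n c F : rsum n (fun k => c * F k) = c * rsum n F.
Proof. induction n as [|n IH]; simpl; [lra|]. rewrite IH. ring. Qed.

Lemma rsum_telescope p (u : nat -> R) : rsum p (fun i => u (S i) - u i) = u p - u O.
Proof. induction p as [|p IH]; simpl; [lra|]. rewrite IH. ring. Qed.

Lemma rsum_le_mono_n N N' F : (N <= N')%nat -> (forall k, 0 <= F k) -> rsum N F <= rsum N' F.
Proof. intros H HF. induction H as [|N' _ IH]; simpl; [lra|]. specialize (HF N'). lra. Qed.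

Lemma Rabs_rsum_le n F : Rabs (rsum n F) <= rsum n (fun k => Rabs (F k)).
Proof.
  induction n as [|n IH]; simpl; [rewrite Rabs_R0; lra|].
  eapply Rle_trans; [apply Rabs_triang|]. lra.
Qed.

Lemma Rabs_rsum_mult_le m (G U Gb Ub : nat -> R) :
  (forall i, (i < m)%nat -> Rabs (G i) <= Gb i) -> (forall i, (i < m)%nat -> Rabs (U i) <= Ub i) ->
  Rabs (rsum m (fun i => G i * U i)) <= rsum m (fun i => Gb i * Ub i).
Proof.
  intros HG HU. eapply Rle_trans; [apply Rabs_rsum_le|]. apply rsum_le. intros i Hi.
  rewrite Rabs_mult. apply Rmult_le_compat; auto; apply Rabs_pos.
Qed.

Lemma rmaxn_ge n F k : (k < n)%nat -> F k <= rmaxn n F.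
Proof.
  induction n as [|[|n] IH]; intros Hk; [lia| simpl; replace k with O by lia; lra|].
  change (rmaxn (S (S n)) F) with (Rmax (rmaxn (S n) F) (F (S n))).
  destruct (Nat.eq_dec k (S n)) as [->|Hne]; [apply Rmax_r|].
  eapply Rle_trans; [apply IH; lia| apply Rmax_l].
Qed.

Lemma rmaxn_le n F M : 0 <= M -> (forall k, (k < n)%nat -> F k <= M) -> rmaxn n F <= M.
Proof.
  intros HM. induction n as [|[|n] IH]; intros H; [simpl; lra| apply H; lia|].
  change (rmaxn (S (S n)) F) with (Rmax (rmaxn (S n) F) (F (S n))).
  apply Rmax_lub; [apply IH; intros; apply H; lia| apply H; lia].
Qed.

Lemma rmaxn_nonneg n F : (forall k, 0 <= F k) -> 0 <= rmaxn n F.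
Proof.
  intros H. destruct n as [|n]; [simpl; lra|].
  eapply Rle_trans; [apply (H O)| apply rmaxn_ge; lia].
Qed.

Lemma vnorm_nonneg n u : 0 <= vnorm n u.
Proof. apply rmaxn_nonneg. intros; apply Rabs_pos. Qed.

Lemma Rabs_le_vnorm n u j : (j < n)%nat -> Rabs (u j) <= vnorm n u.
Proof. intros Hj. exact (rmaxn_ge n (fun j => Rabs (u j)) j Hj). Qed.

Lemma vnorm_le n u M : 0 <= M -> (forall j, (j < n)%nat -> Rabs (u j) <= M) -> vnorm n u <= M.
Proof. intros; apply rmaxn_le; auto. Qed.

Lemma vnorm_scal n c u : vnorm n (vscal c u) = Rabs c * vnorm n u.
Proof.
  unfold vnorm, vscal. induction n as [|[|n] IH]; [simpl; ring| apply Rabs_mult|].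
  change (rmaxn (S (S n)) (fun j => Rabs (c * u j)))
    with (Rmax (rmaxn (S n) (fun j => Rabs (c * u j))) (Rabs (c * u (S n)))).
  change (rmaxn (S (S n)) (fun j => Rabs (u j)))
    with (Rmax (rmaxn (S n) (fun j => Rabs (u j))) (Rabs (u (S n)))).
  rewrite IH, Rabs_mult, RmaxRmult; [reflexivity| apply Rabs_pos].
Qed.

Lemma mnorm_nonneg n Q : 0 <= mnorm n Q.
Proof. apply rmaxn_nonneg. intros; apply rsum_nonneg; intros; apply Rabs_pos. Qed.

Lemma Rabs_matvec_le n Q u k : (k < n)%nat -> Rabs (matvec n Q u k) <= mnorm n Q * vnorm n u.
Proof.
  intros Hk. unfold matvec. eapply Rle_trans; [apply Rabs_rsum_le|].
  apply Rle_trans with (rsum n (fun i => Rabs (Q k i)) * vnorm n u).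
  - rewrite Rmult_comm, <- rsum_scal. apply rsum_le. intros i Hi.
    rewrite Rabs_mult, Rmult_comm. apply Rmult_le_compat_r; [apply Rabs_pos| apply Rabs_le_vnorm; auto].
  - apply Rmult_le_compat_r; [apply vnorm_nonneg|].
    exact (rmaxn_ge n (fun k => rsum n (fun i => Rabs (Q k i))) k Hk).
Qed.

(** * Lipschitz bounds for [C^1] maps *)

Lemma C1_derivable_along_line n F DF (r : R -> nat -> R) u j :
  C1_with n F DF -> (j < n)%nat ->
  (forall s h, vsub (r (s + h)) (r s) = vscal h u) ->
  forall s, derivable_pt_lim (fun s => F (r s) j) s (matvec n (DF (r s)) u j).
Proof.
  intros [HF _] Hj Hr s e He.
  set (D := matvec n (DF (r s)) u j).
  set (c := vnorm n u + 1).
  assert (Hu : 0 <= vnorm n u) by apply vnorm_nonneg.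
  assert (Hc : 0 < c) by (unfold c; lra).
  destruct (HF (r s) (e / c)) as [dl [Hdl Hrem]]; [apply Rdiv_lt_0_compat; lra|].
  assert (Hdlc : 0 < dl / c) by (apply Rdiv_lt_0_compat; lra).
  exists (mkposreal _ Hdlc). simpl. intros h Hh0 Hh.
  assert (Hh' : 0 < Rabs h) by (apply Rabs_pos_lt; auto).
  assert (Hstep : vnorm n (vsub (r (s + h)) (r s)) < dl).
  { rewrite Hr, vnorm_scal.
    apply Rmult_lt_compat_r with (r := c) in Hh; [|lra].
    replace (dl / c * c) with dl in Hh by (field; lra). unfold c in Hh. nra. }
  specialize (Hrem _ Hstep). rewrite Hr, vnorm_scal in Hrem.
  assert (Hlin : matvec n (DF (r s)) (vscal h u) j = h * D).
  { unfold D, matvec, vscal. rewrite <- rsum_scal. apply rsum_ext. intros; ring. }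
  assert (Hcoord : Rabs (F (r (s + h)) j - F (r s) j - h * D) <= e / c * (Rabs h * vnorm n u)).
  { rewrite <- Hlin. eapply Rle_trans; [|exact Hrem]. exact (Rabs_le_vnorm n _ j Hj). }
  assert (Hsmall : e / c * (Rabs h * vnorm n u) < e * Rabs h).
  { apply (Rmult_lt_reg_r c); [lra|].
    replace (e / c * (Rabs h * vnorm n u) * c) with (e * Rabs h * vnorm n u) by (field; lra).
    unfold c. nra. }
  replace ((F (r (s + h)) j - F (r s) j) / h - D) with ((F (r (s + h)) j - F (r s) j - h * D) / h)
    by (field; auto).
  unfold Rdiv. rewrite Rabs_mult, Rabs_inv.
  apply (Rmult_lt_reg_r (Rabs h)); [lra|].
  rewrite Rmult_assoc, Rinv_l by lra. lra.
Qed.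

Lemma C1_lipschitz_on_convex n F DF B Lb :
  C1_with n F DF -> convex B -> (forall p, B p -> mnorm n (DF p) <= Lb) ->
  forall p q, B p -> B q -> forall j, (j < n)%nat ->
  Rabs (F p j - F q j) <= Lb * vnorm n (vsub p q).
Proof.
  intros HF Hcv HL p q Hp Hq j Hj.
  set (r := fun s => vadd (vscal s p) (vscal (1 - s) q)).
  assert (Hr : forall s h, vsub (r (s + h)) (r s) = vscal h (vsub p q)).
  { intros s h. apply functional_extensionality. intros k. unfold r, vsub, vadd, vscal. ring. }
  destruct (MVT_cor2 (fun s => F (r s) j) (fun s => matvec n (DF (r s)) (vsub p q) j) 0 1)
    as [c [Hmvt Hc]]; [lra| intros c _; exact (C1_derivable_along_line n F DF r _ j HF Hj Hr c)|].
  assert (Hr1 : r 1 = p) by (apply functional_extensionality; intros k; unfold r, vadd, vscal; ring).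
  assert (Hr0 : r 0 = q) by (apply functional_extensionality; intros k; unfold r, vadd, vscal; ring).
  simpl in Hmvt. rewrite Hr1, Hr0, Rminus_0_r, Rmult_1_r in Hmvt. rewrite Hmvt.
  eapply Rle_trans; [apply Rabs_matvec_le; auto|].
  apply Rmult_le_compat_r; [apply vnorm_nonneg|].
  apply HL. unfold r. apply Hcv; auto. lra.
Qed.

(** * Null sets and almost-everywhere statements *)

Lemma null_empty : null_set (fun _ => False).
Proof.
  intros e He. exists (fun _ => 0), (fun _ => 0).
  split; [intros; lra|]. split; [intros t []|].
  intros N. rewrite rsum_zero by (intros; ring). lra.
Qed.

Definition interleave (f g : nat -> R) (k : nat) : R :=
  if Nat.even k then f (Nat.div2 k) else g (Nat.div2 k).

Lemma interleave_even f g k : interleave f g (2 * k) = f k.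
Proof. unfold interleave. rewrite Nat.even_even, Nat.div2_double. reflexivity. Qed.

Lemma interleave_odd f g k : interleave f g (S (2 * k)) = g k.
Proof.
  unfold interleave. replace (S (2 * k)) with (2 * k + 1)%nat by lia.
  rewrite Nat.even_odd. replace (2 * k + 1)%nat with (S (2 * k)) by lia.
  rewrite Nat.div2_succ_double. reflexivity.
Qed.

Lemma rsum_interleave N f g : rsum (2 * N) (interleave f g) = rsum N f + rsum N g.
Proof.
  induction N as [|N IH]; [simpl; lra|].
  replace (2 * S N)%nat with (S (S (2 * N))) by lia.
  change (rsum (S (S (2 * N))) (interleave f g))
    with (rsum (2 * N) (interleave f g) + interleave f g (2 * N) + interleave f g (S (2 * N))).
  rewrite IH, interleave_even, interleave_odd. simpl. ring.
Qed.

Lemma null_union A B : null_set A -> null_set B -> null_set (fun t => A t \/ B t).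
Proof.
  intros HA HB e He.
  destruct (HA (e / 2)) as [a1 [b1 [H1 [C1 S1]]]]; [lra|].
  destruct (HB (e / 2)) as [a2 [b2 [H2 [C2 S2]]]]; [lra|].
  exists (interleave a1 a2), (interleave b1 b2). split; [|split].
  - intros k. unfold interleave. destruct (Nat.even k); auto.
  - intros t [Ht|Ht].
    + destruct (C1 t Ht) as [k Hk]. exists (2 * k)%nat. rewrite !interleave_even. exact Hk.
    + destruct (C2 t Ht) as [k Hk]. exists (S (2 * k)). rewrite !interleave_odd. exact Hk.
  - intros N. eapply Rle_trans; [apply (rsum_le_mono_n N (2 * N)); [lia|]|].
    + intros k. unfold interleave.
      destruct (Nat.even k); [specialize (H1 (Nat.div2 k))| specialize (H2 (Nat.div2 k))]; lra.
    + rewrite (rsum_ext _ _ (interleave (fun k => b1 k - a1 k) (fun k => b2 k - a2 k)))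
        by (intros k _; unfold interleave; destruct (Nat.even k); reflexivity).
      rewrite rsum_interleave. specialize (S1 N). specialize (S2 N). lra.
Qed.

Lemma ae_and a b P Q : ae_on a b P -> ae_on a b Q -> ae_on a b (fun t => P t /\ Q t).
Proof.
  intros [N1 [H1 K1]] [N2 [H2 K2]]. exists (fun t => N1 t \/ N2 t).
  split; [apply null_union; auto|]. intros t Ht Hn. split; [apply K1| apply K2]; tauto.
Qed.

Lemma ae_forall a b m (P : nat -> R -> Prop) :
  (forall i, (i < m)%nat -> ae_on a b (P i)) -> ae_on a b (fun t => forall i, (i < m)%nat -> P i t).
Proof.
  induction m as [|m IH]; intros H.
  - exists (fun _ => False). split; [apply null_empty| intros; lia].
  - destruct (ae_and a b _ _ (IH (fun i Hi => H i ltac:(lia))) (H m ltac:(lia))) as [N [HN K]].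
    exists N. split; auto. intros t Ht Hn i Hi. destruct (K t Ht Hn) as [K1 K2].
    destruct (Nat.eq_dec i m) as [->|]; auto. apply K1; lia.
Qed.

Lemma ae_impl a b (P Q : R -> Prop) :
  ae_on a b P -> (forall t, a <= t <= b -> P t -> Q t) -> ae_on a b Q.
Proof. intros [N [HN K]] H. exists N; split; auto. Qed.

Lemma ae_restrict a b a' b' P : ae_on a b P -> a <= a' -> b' <= b -> ae_on a' b' P.
Proof. intros [N [HN K]] H1 H2. exists N; split; auto. intros t Ht; apply K; lra. Qed.

Lemma abs_cont_restrict a b a' b' F : abs_cont_on a b F -> a <= a' -> b' <= b -> abs_cont_on a' b' F.
Proof.
  intros H Ha Hb e He. destruct (H e He) as [d [Hd HF]]. exists d; split; auto.
  intros N s t H1 H2 H3. apply HF; auto. intros k Hk. specialize (H1 k Hk). lra.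
Qed.

Lemma abs_cont_ext a b F G : (forall s, F s = G s) -> abs_cont_on a b F -> abs_cont_on a b G.
Proof. intros H. replace G with F; auto. apply functional_extensionality; auto. Qed.

Lemma abs_cont_const a b c : abs_cont_on a b (fun _ => c).
Proof.
  intros e He. exists 1; split; [lra|]. intros N s t _ _ _.
  rewrite rsum_zero; [lra|]. intros; rewrite Rminus_diag, Rabs_R0; reflexivity.
Qed.

Lemma abs_cont_plus a b F G :
  abs_cont_on a b F -> abs_cont_on a b G -> abs_cont_on a b (fun s => F s + G s).
Proof.
  intros HF HG e He.
  destruct (HF (e / 2)) as [d1 [Hd1 H1]]; [lra|]. destruct (HG (e / 2)) as [d2 [Hd2 H2]]; [lra|].
  exists (Rmin d1 d2). split; [apply Rmin_glb_lt; auto|].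
  intros N s t A B C. pose proof (Rmin_l d1 d2). pose proof (Rmin_r d1 d2).
  specialize (H1 N s t A B ltac:(lra)). specialize (H2 N s t A B ltac:(lra)).
  eapply Rle_lt_trans.
  - apply (rsum_le N _ (fun k => Rabs (F (t k) - F (s k)) + Rabs (G (t k) - G (s k)))).
    intros k _. replace (F (t k) + G (t k) - (F (s k) + G (s k)))
      with ((F (t k) - F (s k)) + (G (t k) - G (s k))) by ring. apply Rabs_triang.
  - rewrite rsum_plus. lra.
Qed.

Lemma abs_cont_scal a b c F : abs_cont_on a b F -> abs_cont_on a b (fun s => c * F s).
Proof.
  intros HF e He. assert (Hc : 0 < Rabs c + 1) by (pose proof (Rabs_pos c); lra).
  destruct (HF (e / (Rabs c + 1))) as [d [Hd H1]]; [apply Rdiv_lt_0_compat; lra|].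
  exists d; split; auto. intros N s t A B C. specialize (H1 N s t A B C).
  rewrite (rsum_ext _ _ (fun k => Rabs c * Rabs (F (t k) - F (s k))))
    by (intros; rewrite <- Rabs_mult; f_equal; ring).
  rewrite rsum_scal.
  assert (0 <= rsum N (fun k => Rabs (F (t k) - F (s k)))) by (apply rsum_nonneg; intros; apply Rabs_pos).
  apply Rmult_lt_compat_l with (r := Rabs c + 1) in H1; [|lra].
  replace ((Rabs c + 1) * (e / (Rabs c + 1))) with e in H1 by (field; lra). nra.
Qed.

Lemma abs_cont_minus a b F G :
  abs_cont_on a b F -> abs_cont_on a b G -> abs_cont_on a b (fun s => F s - G s).
Proof.
  intros HF HG. apply abs_cont_ext with (fun s => F s + (-1) * G s); [intros; ring|].
  apply abs_cont_plus; [|apply abs_cont_scal]; auto.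
Qed.

Lemma abs_cont_rsum a b m (F : nat -> R -> R) :
  (forall i, (i < m)%nat -> abs_cont_on a b (F i)) -> abs_cont_on a b (fun s => rsum m (fun i => F i s)).
Proof.
  induction m as [|m IH]; intros H; simpl; [apply abs_cont_const|].
  apply abs_cont_plus; [apply IH; intros; apply H| apply H]; lia.
Qed.

Lemma derivable_pt_lim_rsum m (F : nat -> R -> R) (D : nat -> R) t :
  (forall i, (i < m)%nat -> derivable_pt_lim (F i) t (D i)) ->
  derivable_pt_lim (fun s => rsum m (fun i => F i s)) t (rsum m D).
Proof.
  induction m as [|m IH]; intros H; simpl.
  - apply derivable_pt_lim_const.
  - apply (derivable_pt_lim_plus (fun s => rsum m (fun i => F i s)) (F m)).
    + apply IH; intros; apply H; lia.
    + apply H; lia.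
Qed.

Lemma choice_on {A B : Type} (D : A -> Prop) (P : A -> B -> Prop) :
  inhabited B -> (forall a, D a -> exists b, P a b) -> exists f : A -> B, forall a, D a -> P a (f a).
Proof.
  intros [b0] H. destruct (choice (fun a b => D a -> P a b)) as [f Hf]; [|exists f; exact Hf].
  intros a. destruct (classic (D a)) as [Ha|Ha].
  - destruct (H a Ha) as [b Hb]. exists b; auto.
  - exists b0; tauto.
Qed.

Lemma nat_fun_bounded p (k : nat -> nat) : exists M, forall i, (i < p)%nat -> (k i < M)%nat.
Proof.
  induction p as [|p [M HM]]; [exists O; intros; lia|].
  exists (S (Nat.max M (k p))). intros i Hi.
  destruct (Nat.eq_dec i p) as [->|]; [lia|]. specialize (HM i ltac:(lia)). lia.
Qed.

(** * Tagged partitions *)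

Definition fine_partition (dl : R -> R) (a b : R) (p : nat) (x tg : nat -> R) : Prop :=
  x O = a /\ x p = b /\
  forall i, (i < p)%nat -> x i <= tg i <= x (S i) /\ x (S i) - x i < dl (tg i).

(* Cousin's lemma, by the supremum of the points [s] up to which [[a, s]] has a fine partition. *)
Lemma cousin dl a b : a <= b -> (forall t, a <= t <= b -> 0 < dl t) ->
  exists p x tg, fine_partition dl a b p x tg.
Proof.
  intros Hab Hpos.
  set (E := fun s => a <= s <= b /\ exists p x tg, fine_partition dl a s p x tg).
  assert (HEa : E a).
  { split; [lra|]. exists O, (fun _ => a), (fun _ => a). repeat split; intros; lia. }
  destruct (completeness E) as [c [Hub Hlub]]; [exists b; intros s [Hs _]; lra| exists a; auto|].
  assert (Hac : a <= c) by (apply Hub; auto).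
  assert (Hcb : c <= b) by (apply Hlub; intros s [Hs _]; lra).
  set (dc := dl c). assert (Hdc : 0 < dc) by (apply Hpos; lra).
  assert (Hnear : exists s, E s /\ c - dc / 2 < s).
  { apply NNPP; intro Hn. assert (c <= c - dc / 2); [|lra].
    apply Hlub. intros s Hs. apply Rnot_lt_le. intro Hlt. apply Hn. exists s; split; auto. }
  destruct Hnear as [s [[Hs [p [x [tg [Hx0 [Hxp Hf]]]]]] Hsc]].
  assert (Hsc' : s <= c) by (apply Hub; split; [lra| exists p, x, tg; exact (conj Hx0 (conj Hxp Hf))]).
  set (c' := Rmin b (c + dc / 4)).
  assert (Hc'1 : c' <= b) by apply Rmin_l. assert (Hc'2 : c' <= c + dc / 4) by apply Rmin_r.
  assert (Hc'3 : c <= c') by (apply Rmin_glb; lra).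
  set (x' := fun i => if Nat.leb i p then x i else c').
  set (tg' := fun i => if Nat.ltb i p then tg i else c).
  assert (Hext : fine_partition dl a c' (S p) x' tg').
  { unfold fine_partition, x', tg'. split; [exact Hx0|].
    replace (Nat.leb (S p) p) with false by (symmetry; apply Nat.leb_gt; lia). split; [reflexivity|].
    intros i Hi. destruct (Nat.ltb i p) eqn:E1.
    - apply Nat.ltb_lt in E1.
      replace (Nat.leb i p) with true by (symmetry; apply Nat.leb_le; lia).
      replace (Nat.leb (S i) p) with true by (symmetry; apply Nat.leb_le; lia). apply Hf; auto.
    - apply Nat.ltb_ge in E1. replace i with p by lia.
      replace (Nat.leb p p) with true by (symmetry; apply Nat.leb_le; lia).
      replace (Nat.leb (S p) p) with false by (symmetry; apply Nat.leb_gt; lia).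
      rewrite Hxp. fold dc. lra. }
  assert (Hc'c : c' <= c) by (apply Hub; split; [lra| exists (S p), x', tg'; exact Hext]).
  assert (Hbc : c' = b).
  { unfold c' in *. unfold Rmin in *. destruct (Rle_dec b (c + dc / 4)); lra. }
  rewrite Hbc in Hext. eauto.
Qed.

Lemma fine_partition_bounds dl a b p x tg :
  fine_partition dl a b p x tg -> forall i, (i <= p)%nat -> a <= x i <= b.
Proof.
  intros [H0 [Hp Hf]].
  assert (Hl : forall i, (i <= p)%nat -> x O <= x i).
  { induction i as [|i IH]; intros Hi; [lra|].
    pose proof (Hf i ltac:(lia)). pose proof (IH ltac:(lia)). lra. }
  assert (Hr : forall d i, (i + d = p)%nat -> x i <= x p).
  { induction d as [|d IH]; intros i Hi; [replace i with p by lia; lra|].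
    pose proof (Hf i ltac:(lia)). pose proof (IH (S i) ltac:(lia)). lra. }
  intros i Hi. split; [rewrite <- H0; auto| rewrite <- Hp; apply (Hr (p - i)%nat); lia].
Qed.

Definition rind (P : Prop) : R := if excluded_middle_informative P then 1 else 0.

Lemma rind_bounds P : 0 <= rind P <= 1.
Proof. unfold rind; destruct (excluded_middle_informative P); lra. Qed.

Lemma rsum_rind_length_in_interval (x : nat -> R) p al be :
  (forall i, (i < p)%nat -> x i <= x (S i)) ->
  rsum p (fun i => rind (al <= x i /\ x (S i) <= be) * (x (S i) - x i)) <= Rmax 0 (Rmin (x p) be - al).
Proof.
  induction p as [|p IH]; intros Hs; simpl; [unfold Rmax; destruct (Rle_dec 0 _); lra|].
  pose proof (IH (fun i Hi => Hs i ltac:(lia))) as IHp. pose proof (Hs p ltac:(lia)) as Hp.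
  unfold rind at 2. destruct (excluded_middle_informative _) as [[H1 H2]|Hn].
  - replace (Rmax 0 (Rmin (x p) be - al)) with (x p - al) in IHp
      by (unfold Rmin; destruct (Rle_dec (x p) be); try lra; unfold Rmax; destruct (Rle_dec 0 _); lra).
    replace (Rmax 0 (Rmin (x (S p)) be - al)) with (x (S p) - al)
      by (unfold Rmin; destruct (Rle_dec (x (S p)) be); try lra; unfold Rmax; destruct (Rle_dec 0 _); lra).
    lra.
  - assert (Rmax 0 (Rmin (x p) be - al) <= Rmax 0 (Rmin (x (S p)) be - al)).
    { apply Rle_max_compat_l. unfold Rmin. destruct (Rle_dec (x p) be); destruct (Rle_dec (x (S p)) be); lra. }
    lra.
Qed.

Lemma rsum_rind_length_covered_by (x : nat -> R) p (aa bb : nat -> R) M : forall P : nat -> Prop,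
  (forall i, (i < p)%nat -> x i <= x (S i)) -> (forall k, aa k <= bb k) ->
  (forall i, (i < p)%nat -> P i -> exists k, (k < M)%nat /\ aa k <= x i /\ x (S i) <= bb k) ->
  rsum p (fun i => rind (P i) * (x (S i) - x i)) <= rsum M (fun k => bb k - aa k).
Proof.
  induction M as [|M IH]; intros P Hs Hab HP.
  - simpl. rewrite rsum_zero; [lra|]. intros i Hi. unfold rind.
    destruct (excluded_middle_informative (P i)) as [HPi|]; [|ring].
    destruct (HP i Hi HPi) as [k [Hk _]]; lia.
  - simpl.
    set (P' := fun i => P i /\ exists k, (k < M)%nat /\ aa k <= x i /\ x (S i) <= bb k).
    set (In_M := fun i => aa M <= x i /\ x (S i) <= bb M).
    apply Rle_trans with
      (rsum p (fun i => rind (P' i) * (x (S i) - x i) + rind (In_M i) * (x (S i) - x i))).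
    + apply rsum_le. intros i Hi. pose proof (Hs i Hi). unfold rind.
      destruct (excluded_middle_informative (P i)) as [HPi|HPi];
      destruct (excluded_middle_informative (P' i)) as [HP'|HP'];
      destruct (excluded_middle_informative (In_M i)) as [Hm|Hm]; try lra.
      exfalso. destruct (HP i Hi HPi) as [k [Hk Hc]].
      destruct (Nat.eq_dec k M) as [->|]; [apply Hm, Hc|].
      apply HP'; split; auto; exists k; split; auto; lia.
    + rewrite rsum_plus. apply Rplus_le_compat.
      * apply IH; auto. intros i Hi [_ H]; auto.
      * eapply Rle_trans; [apply rsum_rind_length_in_interval; auto|].
        specialize (Hab M). unfold Rmax, Rmin. destruct (Rle_dec (x p) (bb M)); destruct (Rle_dec 0 _); lra.
Qed.

Lemma rsum_rind_length_covered (x : nat -> R) p (aa bb : nat -> R) (P : nat -> Prop) :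
  (forall i, (i < p)%nat -> x i <= x (S i)) -> (forall k, aa k <= bb k) ->
  (forall i, (i < p)%nat -> P i -> exists k, aa k <= x i /\ x (S i) <= bb k) ->
  exists M, rsum p (fun i => rind (P i) * (x (S i) - x i)) <= rsum M (fun k => bb k - aa k).
Proof.
  intros Hs Hab HP.
  destruct (choice_on (fun i => (i < p)%nat) (fun i k => P i -> aa k <= x i /\ x (S i) <= bb k))
    as [kf Hkf]; [exact (inhabits O)| |].
  { intros i Hi. destruct (classic (P i)) as [HPi|HPi].
    - destruct (HP i Hi HPi) as [k Hk]. exists k; auto.
    - exists O; tauto. }
  destruct (nat_fun_bounded p kf) as [M HM]. exists M.
  apply rsum_rind_length_covered_by; auto.
  intros i Hi HPi. exists (kf i). split; auto.
Qed.

(** * Mean value inequality for absolutely continuous functions *)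

Lemma Rle_of_le_plus_small_multiple X Y Z : (forall e, 0 < e -> e <= 1 -> X <= Y + e * Z) -> X <= Y.
Proof.
  intros H. apply Rle_plus_epsilon. intros eps Heps.
  assert (HZ : 0 < Rabs Z + 1) by (pose proof (Rabs_pos Z); lra).
  set (e := Rmin 1 (eps / (Rabs Z + 1))).
  assert (He : 0 < e) by (apply Rmin_glb_lt; [lra| apply Rdiv_lt_0_compat; lra]).
  assert (HeZ : e * (Rabs Z + 1) <= eps).
  { apply Rle_trans with (eps / (Rabs Z + 1) * (Rabs Z + 1)); [|right; field; lra].
    apply Rmult_le_compat_r; [lra| apply Rmin_r]. }
  specialize (H e He (Rmin_l _ _)).
  assert (e * Z <= e * Rabs Z) by (apply Rmult_le_compat_l; [lra| apply Rle_abs]). nra.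
Qed.

Definition slope_le (phi : R -> R) (c t dl : R) : Prop :=
  forall s, Rabs (s - t) < dl ->
  (t <= s -> phi s - phi t <= c * (s - t)) /\ (s <= t -> phi t - phi s <= c * (t - s)).

Lemma derivable_slope_le phi t d G e :
  derivable_pt_lim phi t d -> d <= G -> 0 < e -> exists dl, 0 < dl /\ slope_le phi (G + e) t dl.
Proof.
  intros Hd HdG He. destruct (Hd e He) as [dl Hdl]. exists dl. split; [apply cond_pos|].
  intros s Hs.
  assert (Happrox : Rabs (phi s - phi t - d * (s - t)) <= e * Rabs (s - t)).
  { destruct (Req_dec s t) as [->|Hst].
    - rewrite !Rminus_diag, Rmult_0_r, Rminus_0_r, Rabs_R0. lra.
    - specialize (Hdl (s - t) ltac:(lra) Hs). replace (t + (s - t)) with s in Hdl by ring.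
      replace (phi s - phi t - d * (s - t)) with ((s - t) * ((phi s - phi t) / (s - t) - d))
        by (field; lra).
      rewrite Rabs_mult, Rmult_comm. apply Rmult_le_compat_r; [apply Rabs_pos| lra]. }
  pose proof (Rle_abs (phi s - phi t - d * (s - t))) as Hup.
  pose proof (Rle_abs (- (phi s - phi t - d * (s - t)))) as Hlow. rewrite Rabs_Ropp in Hlow.
  split; intros Hst.
  - rewrite (Rabs_right (s - t)) in Happrox by lra.
    assert (d * (s - t) <= G * (s - t)) by (apply Rmult_le_compat_r; lra). lra.
  - rewrite (Rabs_left1 (s - t)) in Happrox by lra.
    assert (d * (t - s) <= G * (t - s)) by (apply Rmult_le_compat_r; lra). lra.
Qed.

Lemma slope_le_interval phi c t dl s s' : slope_le phi c t dl -> s <= t <= s' -> s' - s < dl ->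
  phi s' - phi s <= c * (s' - s).
Proof.
  intros Hsl Ht Hlen.
  destruct (Hsl s') as [Hr _]; [rewrite Rabs_right; lra|].
  destruct (Hsl s) as [_ Hl]; [rewrite Rabs_left1; lra|].
  specialize (Hr (proj2 Ht)). specialize (Hl (proj1 Ht)). lra.
Qed.

Lemma slope_or_cover_gauge a b phi G e (N : R -> Prop) (aa bb : nat -> R) : 0 < e ->
  (forall t, N t -> exists k, aa k < t < bb k) ->
  (forall t, a <= t <= b -> ~ N t -> exists d, derivable_pt_lim phi t d /\ d <= G) ->
  exists dl : R -> R, forall t, a <= t <= b -> 0 < dl t /\
    (slope_le phi (G + e) t (dl t) \/ exists k, aa k <= t - dl t /\ t + dl t <= bb k).
Proof.
  intros He Hcov Hd.
  apply (choice_on (fun t => a <= t <= b)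
    (fun t dl => 0 < dl /\ (slope_le phi (G + e) t dl \/ exists k, aa k <= t - dl /\ t + dl <= bb k)));
    [exact (inhabits 0)|].
  intros t Ht. destruct (classic (N t)) as [HNt|HNt].
  - destruct (Hcov t HNt) as [k Hk]. exists (Rmin (t - aa k) (bb k - t)).
    pose proof (Rmin_l (t - aa k) (bb k - t)). pose proof (Rmin_r (t - aa k) (bb k - t)).
    split; [apply Rmin_glb_lt; lra| right; exists k; lra].
  - destruct (Hd t Ht HNt) as [d [Hder HdG]].
    destruct (derivable_slope_le phi t d G e Hder HdG He) as [dl [Hpos Hsl]].
    exists dl. auto.
Qed.

Lemma partition_increment_le phi c p (x : nat -> R) (P : nat -> Prop) :
  (forall i, (i < p)%nat -> x i <= x (S i)) ->
  (forall i, (i < p)%nat -> ~ P i -> phi (x (S i)) - phi (x i) <= c * (x (S i) - x i)) ->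
  phi (x p) - phi (x O) <= c * (x p - x O)
    + rsum p (fun i => rind (P i) * Rabs (phi (x (S i)) - phi (x i)))
    + Rabs c * rsum p (fun i => rind (P i) * (x (S i) - x i)).
Proof.
  intros Hs Hgood.
  replace (phi (x p) - phi (x O)) with (rsum p (fun i => phi (x (S i)) - phi (x i)))
    by exact (rsum_telescope p (fun i => phi (x i))).
  replace (x p - x O) with (rsum p (fun i => x (S i) - x i)) by exact (rsum_telescope p x).
  rewrite <- !rsum_scal, <- !rsum_plus. apply rsum_le. intros i Hi. pose proof (Hs i Hi).
  unfold rind. destruct (excluded_middle_informative (P i)) as [HP|HP].
  - pose proof (Rle_abs (phi (x (S i)) - phi (x i))). pose proof (Rle_abs (- c)).
    rewrite Rabs_Ropp in *. nra.
  - specialize (Hgood i Hi HP). lra.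
Qed.

Lemma abs_cont_selected_variation a b phi : abs_cont_on a b phi ->
  forall e, 0 < e -> exists delta, 0 < delta /\
  forall p (x : nat -> R) (P : nat -> Prop),
  (forall i, (i <= p)%nat -> a <= x i <= b) -> (forall i, (i < p)%nat -> x i <= x (S i)) ->
  rsum p (fun i => rind (P i) * (x (S i) - x i)) < delta ->
  rsum p (fun i => rind (P i) * Rabs (phi (x (S i)) - phi (x i))) < e.
Proof.
  intros Hac e He. destruct (Hac e He) as [delta [Hdelta Hd]]. exists delta. split; auto.
  intros p x P Hxb Hs Hlen.
  (* unselected intervals collapse to the point [x i] *)
  set (x' := fun i => if excluded_middle_informative (P i) then x (S i) else x i).
  rewrite (rsum_ext _ _ (fun i => Rabs (phi (x' i) - phi (x i)))).
  2: { intros i _. unfold x', rind. destruct (excluded_middle_informative (P i)); [ring|].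
       rewrite Rminus_diag, Rabs_R0. ring. }
  apply Hd.
  - intros k Hk. pose proof (Hxb k ltac:(lia)). pose proof (Hxb (S k) ltac:(lia)).
    pose proof (Hs k Hk). unfold x'. destruct (excluded_middle_informative (P k)); lra.
  - intros k Hk. pose proof (Hs k ltac:(lia)). unfold x'. destruct (excluded_middle_informative (P k)); lra.
  - rewrite (rsum_ext _ _ (fun i => rind (P i) * (x (S i) - x i))); auto.
    intros i _. unfold x', rind. destruct (excluded_middle_informative (P i)); ring.
Qed.

(* On a fine tagged partition, intervals with a tag where the derivative bound holds obey the
   slope bound; the remaining tags lie in the small cover of the exceptional null set, so their
   intervals have small total length and, by absolute continuity, small total variation. *)
Lemma abs_cont_ae_deriv_le a b phi G : a <= b -> abs_cont_on a b phi ->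
  ae_on a b (fun t => exists d, derivable_pt_lim phi t d /\ d <= G) ->
  phi b - phi a <= G * (b - a).
Proof.
  intros Hab Hac [N [HN Hd]].
  apply (Rle_of_le_plus_small_multiple _ _ (b - a + 2 + Rabs G)). intros e He He1.
  destruct (abs_cont_selected_variation a b phi Hac e He) as [delta [Hdelta Hvar]].
  set (eta := Rmin delta e / 2).
  assert (Heta : 0 < eta) by (unfold eta; pose proof (Rmin_glb_lt delta e 0 Hdelta He); lra).
  assert (Heta1 : eta < delta) by (unfold eta; pose proof (Rmin_l delta e); lra).
  assert (Heta2 : eta <= e / 2) by (unfold eta; pose proof (Rmin_r delta e); lra).
  destruct (HN eta Heta) as [aa [bb [Hab' [Hcov Hlen]]]].
  destruct (slope_or_cover_gauge a b phi G e N aa bb He Hcov Hd) as [dl Hdl].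
  destruct (cousin dl a b Hab) as [p [x [tg Hfine]]]; [intros t Ht; apply Hdl, Ht|].
  pose proof (fine_partition_bounds _ _ _ _ _ _ Hfine) as Hxb.
  destruct Hfine as [Hx0 [Hxp Hf]].
  assert (Hs : forall i, (i < p)%nat -> x i <= x (S i)) by (intros i Hi; pose proof (Hf i Hi); lra).
  assert (Htg : forall i, (i < p)%nat -> a <= tg i <= b).
  { intros i Hi. pose proof (Hxb i ltac:(lia)). pose proof (Hxb (S i) ltac:(lia)).
    pose proof (Hf i Hi). lra. }
  set (P := fun i => ~ slope_le phi (G + e) (tg i) (dl (tg i))).
  assert (Hgood : forall i, (i < p)%nat -> ~ P i ->
    phi (x (S i)) - phi (x i) <= (G + e) * (x (S i) - x i)).
  { intros i Hi HP. apply NNPP in HP. destruct (Hf i Hi) as [Htag Hshort].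
    exact (slope_le_interval phi _ _ _ _ _ HP Htag Hshort). }
  assert (Hbad_len : rsum p (fun i => rind (P i) * (x (S i) - x i)) <= eta).
  { destruct (rsum_rind_length_covered x p aa bb P Hs Hab') as [M HM]; [|specialize (Hlen M); lra].
    intros i Hi HP. destruct (Hdl (tg i) (Htg i Hi)) as [_ [Hsl|[k Hk]]]; [contradiction|].
    exists k. pose proof (Hf i Hi). lra. }
  pose proof (Hvar p x P Hxb Hs ltac:(lra)) as Hbad_var.
  pose proof (partition_increment_le phi (G + e) p x P Hs Hgood) as Hinc. rewrite Hx0, Hxp in Hinc.
  assert (Rabs (G + e) <= Rabs G + 1)
    by (eapply Rle_trans; [apply Rabs_triang| rewrite (Rabs_right e); lra]).
  assert (0 <= rsum p (fun i => rind (P i) * (x (S i) - x i))).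
  { apply rsum_nonneg. intros i Hi. pose proof (rind_bounds (P i)). pose proof (Hs i Hi). nra. }
  assert (Rabs (G + e) * rsum p (fun i => rind (P i) * (x (S i) - x i)) <= (Rabs G + 1) * (e / 2))
    by (apply Rmult_le_compat; [apply Rabs_pos| | |]; lra).
  pose proof (Rabs_pos G). nra.
Qed.

Lemma abs_cont_ae_deriv_abs_le a b phi G : a <= b -> abs_cont_on a b phi ->
  ae_on a b (fun t => exists d, derivable_pt_lim phi t d /\ Rabs d <= G) ->
  Rabs (phi b - phi a) <= G * (b - a).
Proof.
  intros Hab Hac Hd. apply Rabs_le. split.
  - assert (- phi b - - phi a <= G * (b - a)); [|lra].
    apply (abs_cont_ae_deriv_le a b (fun s => - phi s)); auto.
    + apply abs_cont_ext with (fun s => (-1) * phi s); [intros; ring| apply abs_cont_scal; auto].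
    + apply (ae_impl _ _ _ _ Hd). intros t _ [d [Hder HdG]]. exists (- d). split.
      * exact (derivable_pt_lim_opp phi t d Hder).
      * pose proof (Rle_abs (- d)). rewrite Rabs_Ropp in *. lra.
  - apply abs_cont_ae_deriv_le; auto. apply (ae_impl _ _ _ _ Hd). intros t _ [d [Hder HdG]].
    exists d. split; auto. pose proof (Rle_abs d). lra.
Qed.

(** * The local error estimate *)

Definition speed_bound m K (Ki U : nat -> R) : R := K + rsum m (fun i => Ki i * U i).

Definition local_error_const m L (Li V W : nat -> R) (cx cy : R) : R :=
  L * (cx + cy) + rsum m (fun i => Li i * V i * (cx + cy) + Li i * cy * (V i + W i)).

Lemma solution_coord_lipschitz n m a b f g u z B K Ki U : a <= b ->
  solution_on n m a b f g u z -> (forall t, a <= t <= b -> B (z t)) ->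
  (forall p, B p -> vnorm n (f p) <= K) ->
  (forall i p, (i < m)%nat -> B p -> vnorm n (g i p) <= Ki i) ->
  (forall i t, (i < m)%nat -> a <= t <= b -> Rabs (u i t) <= U i) ->
  forall j, (j < n)%nat -> forall t, a <= t <= b ->
  Rabs (z t j - z a j) <= speed_bound m K Ki U * (t - a).
Proof.
  intros Hab [Hac Hae] HB HK HKi HU j Hj t Ht.
  apply (abs_cont_ae_deriv_abs_le a t (fun s => z s j)); [lra| apply abs_cont_restrict with a b; auto; lra|].
  apply (ae_impl a t _ _ (ae_restrict a b a t _ Hae ltac:(lra) ltac:(lra))). intros s Hs Hd.
  eexists. split; [apply (Hd j Hj)|].
  eapply Rle_trans; [apply Rabs_triang| apply Rplus_le_compat].
  - eapply Rle_trans; [apply Rabs_le_vnorm; eauto| apply HK, HB; lra].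
  - apply Rabs_rsum_mult_le; intros i Hi; [|apply HU; auto; lra].
    eapply Rle_trans; [apply Rabs_le_vnorm; eauto| apply HKi, HB; auto; lra].
Qed.

Section LocalError.

Variables (n m : nat) (f : (nat -> R) -> nat -> R) (Df : (nat -> R) -> nat -> nat -> R)
  (g : nat -> (nat -> R) -> nat -> R) (Dg : nat -> (nat -> R) -> nat -> nat -> R)
  (v w : nat -> R -> R) (x y : R -> nat -> R) (tk tk1 : R) (B : (nat -> R) -> Prop)
  (K L : R) (Ki Li V W : nat -> R) (F : nat -> R -> R).

Hypothesis Htk : tk < tk1.
Hypothesis Cf : C1_with n f Df.
Hypothesis Cg : forall i, (i < m)%nat -> C1_with n (g i) (Dg i).
Hypothesis Hv : forall i t, (i < m)%nat -> tk <= t <= tk1 -> Rabs (v i t) <= V i.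
Hypothesis Hw : forall i t, (i < m)%nat -> tk <= t <= tk1 -> Rabs (w i t) <= W i.
Hypothesis HF : forall i, (i < m)%nat ->
  abs_cont_on tk tk1 (F i) /\ ae_on tk tk1 (fun t => derivable_pt_lim (F i) t (v i t - w i t)) /\
  F i tk1 - F i tk = 0.
Hypothesis Sx : solution_on n m tk tk1 f g v x.
Hypothesis Sy : solution_on n m tk tk1 f g w y.
Hypothesis Hy0 : forall j, (j < n)%nat -> y tk j = x tk j.
Hypothesis Hcv : convex B.
Hypothesis HB : forall t, tk <= t <= tk1 -> B (x t) /\ B (y t).
Hypothesis HK : forall p, B p -> vnorm n (f p) <= K.
Hypothesis HKi : forall i p, (i < m)%nat -> B p -> vnorm n (g i p) <= Ki i.
Hypothesis HL : forall p, B p -> mnorm n (Df p) <= L.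
Hypothesis HLi : forall i p, (i < m)%nat -> B p -> mnorm n (Dg i p) <= Li i.

Let h := tk1 - tk.
Let cx := speed_bound m K Ki V.
Let cy := speed_bound m K Ki W.
Let C := local_error_const m L Li V W cx cy.

Lemma bounds_nonneg : 0 <= K /\ 0 <= L /\
  forall i, (i < m)%nat -> 0 <= Ki i /\ 0 <= Li i /\ 0 <= V i /\ 0 <= W i.
Proof.
  assert (Hx : B (x tk)) by (apply HB; lra).
  split; [|split].
  - eapply Rle_trans; [apply vnorm_nonneg| apply HK; eauto].
  - eapply Rle_trans; [apply mnorm_nonneg| apply HL; eauto].
  - intros i Hi. repeat split.
    + eapply Rle_trans; [apply vnorm_nonneg| apply HKi; eauto].
    + eapply Rle_trans; [apply mnorm_nonneg| apply HLi; eauto].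
    + eapply Rle_trans; [apply Rabs_pos| apply (Hv i tk Hi); lra].
    + eapply Rle_trans; [apply Rabs_pos| apply (Hw i tk Hi); lra].
Qed.

Lemma speed_bounds_nonneg : 0 <= cx /\ 0 <= cy.
Proof.
  destruct bounds_nonneg as [HK0 [_ Hnn]]. unfold cx, cy, speed_bound.
  split; apply Rplus_le_le_0_compat; auto;
    apply rsum_nonneg; intros i Hi; destruct (Hnn i Hi) as [? [_ [? ?]]]; nra.
Qed.

Lemma local_error_const_nonneg : 0 <= C.
Proof.
  destruct bounds_nonneg as [_ [HL0 Hnn]]. destruct speed_bounds_nonneg as [Hcx Hcy].
  unfold C, local_error_const.
  assert (0 <= rsum m (fun i => Li i * V i * (cx + cy) + Li i * cy * (V i + W i))); [|nra].
  apply rsum_nonneg. intros i Hi. destruct (Hnn i Hi) as [_ [? [? ?]]].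
  assert (0 <= Li i * V i) by nra. assert (0 <= Li i * cy) by nra. nra.
Qed.

Lemma gap_le t : tk <= t <= tk1 -> vnorm n (vsub (x t) (y t)) <= (cx + cy) * h.
Proof.
  intros Ht. destruct speed_bounds_nonneg as [Hcx Hcy].
  apply vnorm_le; [unfold h; nra|]. intros j Hj. unfold vsub.
  pose proof (solution_coord_lipschitz n m tk tk1 f g v x B K Ki V ltac:(lra) Sx
    (fun s Hs => proj1 (HB s Hs)) HK HKi Hv j Hj t Ht) as Hx.
  pose proof (solution_coord_lipschitz n m tk tk1 f g w y B K Ki W ltac:(lra) Sy
    (fun s Hs => proj2 (HB s Hs)) HK HKi Hw j Hj t Ht) as Hy.
  fold cx in Hx. fold cy in Hy. rewrite (Hy0 j Hj) in Hy.
  replace (x t j - y t j) with ((x t j - x tk j) + - (y t j - x tk j)) by ring.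
  eapply Rle_trans; [apply Rabs_triang|]. rewrite Rabs_Ropp. unfold h. nra.
Qed.

Lemma y_drift_le t : tk <= t <= tk1 -> vnorm n (vsub (y t) (y tk)) <= cy * h.
Proof.
  intros Ht. destruct speed_bounds_nonneg as [_ Hcy].
  apply vnorm_le; [unfold h; nra|]. intros j Hj. unfold vsub.
  pose proof (solution_coord_lipschitz n m tk tk1 f g w y B K Ki W ltac:(lra) Sy
    (fun s Hs => proj2 (HB s Hs)) HK HKi Hw j Hj t Ht) as Hy.
  fold cy in Hy. unfold h. nra.
Qed.

Definition corrected_gap j s := x s j - y s j - rsum m (fun i => g i (y tk) j * (F i s - F i tk)).

Definition corrected_gap_slope j t := f (x t) j - f (y t) j +
  rsum m (fun i => (g i (x t) j - g i (y t) j) * v i t + (g i (y t) j - g i (y tk) j) * (v i t - w i t)).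

Lemma corrected_gap_abs_cont j : (j < n)%nat -> abs_cont_on tk tk1 (corrected_gap j).
Proof.
  intros Hj. unfold corrected_gap.
  apply abs_cont_minus; [apply abs_cont_minus; [apply (proj1 Sx j Hj)| apply (proj1 Sy j Hj)]|].
  apply abs_cont_rsum. intros i Hi. apply abs_cont_scal, abs_cont_minus; [apply HF, Hi| apply abs_cont_const].
Qed.

Lemma corrected_gap_derivable j : (j < n)%nat ->
  ae_on tk tk1 (fun t => derivable_pt_lim (corrected_gap j) t (corrected_gap_slope j t)).
Proof.
  intros Hj.
  assert (HFd : ae_on tk tk1 (fun t => forall i, (i < m)%nat -> derivable_pt_lim (F i) t (v i t - w i t)))
    by (apply ae_forall; intros i Hi; apply HF, Hi).
  apply (ae_impl _ _ _ _ (ae_and _ _ _ _ (proj2 Sx) (ae_and _ _ _ _ (proj2 Sy) HFd))).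
  intros t Ht [Dx [Dy DF]].
  replace (corrected_gap_slope j t) with
    ((f (x t) j + rsum m (fun i => g i (x t) j * v i t))
     - (f (y t) j + rsum m (fun i => g i (y t) j * w i t))
     - rsum m (fun i => g i (y tk) j * ((v i t - w i t) - 0))).
  2: { unfold corrected_gap_slope.
       assert (Hsum : rsum m (fun i => (g i (x t) j - g i (y t) j) * v i t
                                       + (g i (y t) j - g i (y tk) j) * (v i t - w i t))
         = rsum m (fun i => g i (x t) j * v i t) - rsum m (fun i => g i (y t) j * w i t)
           - rsum m (fun i => g i (y tk) j * (v i t - w i t - 0))).
       { rewrite <- !rsum_minus. apply rsum_ext. intros; ring. }
       rewrite Hsum. ring. }
  unfold corrected_gap.
  apply (derivable_pt_lim_minus (fun s => x s j - y s j)).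
  - apply (derivable_pt_lim_minus (fun s => x s j) (fun s => y s j)); [apply Dx| apply Dy]; exact Hj.
  - apply derivable_pt_lim_rsum. intros i Hi.
    apply (derivable_pt_lim_scal (fun s => F i s - F i tk)).
    apply (derivable_pt_lim_minus (F i) (fun _ => F i tk)); [apply DF, Hi| apply derivable_pt_lim_const].
Qed.

Lemma corrected_gap_slope_le j t : (j < n)%nat -> tk <= t <= tk1 ->
  Rabs (corrected_gap_slope j t) <= C * h.
Proof.
  intros Hj Ht. destruct (HB t Ht) as [Bx By]. pose proof (proj2 (HB tk ltac:(lra))) as Byk.
  destruct bounds_nonneg as [_ [HL0 Hnn]]. destruct speed_bounds_nonneg as [Hcx Hcy].
  pose proof (gap_le t Ht) as Hgap. pose proof (y_drift_le t Ht) as Hdrift.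
  assert (Hh : 0 <= h) by (unfold h; lra).
  assert (Hf_diff : Rabs (f (x t) j - f (y t) j) <= L * ((cx + cy) * h)).
  { eapply Rle_trans; [apply (C1_lipschitz_on_convex n f Df B L Cf Hcv HL); auto|].
    apply Rmult_le_compat_l; auto. }
  assert (Hterm : forall i, (i < m)%nat ->
    Rabs ((g i (x t) j - g i (y t) j) * v i t + (g i (y t) j - g i (y tk) j) * (v i t - w i t))
      <= h * (Li i * V i * (cx + cy) + Li i * cy * (V i + W i))).
  { intros i Hi. destruct (Hnn i Hi) as [_ [HLi0 [HV0 HW0]]].
    assert (Hg_gap : Rabs (g i (x t) j - g i (y t) j) <= Li i * ((cx + cy) * h)).
    { eapply Rle_trans; [apply (C1_lipschitz_on_convex n (g i) (Dg i) B (Li i) (Cg i Hi) Hcv); auto|].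
      apply Rmult_le_compat_l; auto. }
    assert (Hg_drift : Rabs (g i (y t) j - g i (y tk) j) <= Li i * (cy * h)).
    { eapply Rle_trans; [apply (C1_lipschitz_on_convex n (g i) (Dg i) B (Li i) (Cg i Hi) Hcv); auto|].
      apply Rmult_le_compat_l; auto. }
    assert (Hvw : Rabs (v i t - w i t) <= V i + W i).
    { unfold Rminus. eapply Rle_trans; [apply Rabs_triang|]. rewrite Rabs_Ropp.
      pose proof (Hv i t Hi Ht). pose proof (Hw i t Hi Ht). lra. }
    eapply Rle_trans; [apply Rabs_triang|]. rewrite !Rabs_mult.
    assert (Rabs (g i (x t) j - g i (y t) j) * Rabs (v i t) <= Li i * ((cx + cy) * h) * V i)
      by (apply Rmult_le_compat; auto; apply Rabs_pos).
    assert (Rabs (g i (y t) j - g i (y tk) j) * Rabs (v i t - w i t) <= Li i * (cy * h) * (V i + W i))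
      by (apply Rmult_le_compat; auto; apply Rabs_pos).
    nra. }
  unfold corrected_gap_slope, C, local_error_const.
  eapply Rle_trans; [apply Rabs_triang|].
  eapply Rle_trans; [apply Rplus_le_compat; [exact Hf_diff|]|].
  - eapply Rle_trans; [apply Rabs_rsum_le| apply rsum_le; exact Hterm].
  - rewrite rsum_scal. nra.
Qed.

Lemma local_error_bound : vnorm n (vsub (x tk1) (y tk1)) <= C * h ^ 2.
Proof.
  apply vnorm_le.
  - pose proof local_error_const_nonneg. pose proof (pow2_ge_0 h). nra.
  - intros j Hj.
    assert (Hends : corrected_gap j tk1 - corrected_gap j tk = x tk1 j - y tk1 j).
    { unfold corrected_gap.
      rewrite (rsum_zero m (fun i => g i (y tk) j * (F i tk1 - F i tk)))
        by (intros i Hi; destruct (HF i Hi) as [_ [_ ->]]; ring).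
      rewrite rsum_zero by (intros; ring). rewrite (Hy0 j Hj). ring. }
    unfold vsub. rewrite <- Hends. replace (C * h ^ 2) with (C * h * (tk1 - tk)) by (unfold h; ring).
    apply abs_cont_ae_deriv_abs_le; [lra| apply corrected_gap_abs_cont; auto|].
    apply (ae_impl _ _ _ _ (corrected_gap_derivable j Hj)). intros t Ht Hder.
    exists (corrected_gap_slope j t). split; auto. apply corrected_gap_slope_le; auto.
Qed.

End LocalError.


Theorem mainTheorem2 :
  forall (m : nat) (K L Lam : R) (Ki Li V W : nat -> R),
  Lam <> 0 ->
  (forall i, (i < m)%nat -> 0 < V i) ->
  exists C : R,
  forall (n : nat)
    (f : (nat -> R) -> (nat -> R)) (Df : (nat -> R) -> nat -> nat -> R)
    (g : nat -> (nat -> R) -> (nat -> R)) (Dg : nat -> (nat -> R) -> nat -> nat -> R)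
    (v w : nat -> R -> R) (x y : R -> nat -> R) (tk tk1 : R) (B : (nat -> R) -> Prop),
  tk < tk1 ->
  C1_with n f Df ->
  (forall i, (i < m)%nat -> C1_with n (g i) (Dg i)) ->
  (forall i, (i < m)%nat -> measurable_on tk tk1 (v i)) ->
  (forall i t, (i < m)%nat -> tk <= t <= tk1 -> Rabs (v i t) <= V i) ->
  (forall i, (i < m)%nat -> measurable_on tk tk1 (w i)) ->
  (forall i t, (i < m)%nat -> tk <= t <= tk1 -> Rabs (w i t) <= W i) ->
  (forall i, (i < m)%nat -> leb_integral_is tk tk1 (fun t => v i t - w i t) 0) ->
  solution_on n m tk tk1 f g v x ->
  solution_on n m tk tk1 f g w y ->
  (forall j, (j < n)%nat -> y tk j = x tk j) ->
  convex B ->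
  (forall t, tk <= t <= tk1 -> B (x t) /\ B (y t)) ->
  (forall p, B p -> vnorm n (f p) <= K) ->
  (forall i p, (i < m)%nat -> B p -> vnorm n (g i p) <= Ki i) ->
  (forall p, B p -> mnorm n (Df p) <= L) ->
  (forall i p, (i < m)%nat -> B p -> mnorm n (Dg i p) <= Li i) ->
  (forall p, B p -> lognorm n (Df p) <= Lam) ->
  vnorm n (vsub (x tk1) (y tk1)) <= C * (tk1 - tk) ^ 2.
Proof.
  intros m K L Lam Ki Li V W _ _.
  exists (local_error_const m L Li V W (speed_bound m K Ki V) (speed_bound m K Ki W)).
  intros n f Df g Dg v w x y tk tk1 B Htk Cf Cg _ Hv _ Hw Hmoment Sx Sy Hy0 Hcv HB HK HKi HL HLi _.
  destruct (choice_on (fun i => (i < m)%nat)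
    (fun i Fi => abs_cont_on tk tk1 Fi /\ ae_on tk tk1 (fun t => derivable_pt_lim Fi t (v i t - w i t)) /\
                 Fi tk1 - Fi tk = 0) (inhabits (fun _ => 0)) Hmoment) as [F HF].
  exact (local_error_bound n m f Df g Dg v w x y tk tk1 B K L Ki Li V W F
           Htk Cf Cg Hv Hw HF Sx Sy Hy0 Hcv HB HK HKi HL HLi).
Qed.
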